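(* Let $m,k\in\mathbb{Z}$, let $(H,\alpha)$ be a monoidal Hom-bialgebra and $(C,\beta)$ a monoidal Hom-algebra which is a left weak $(H,\alpha)$-Hom-module algebra via $h\otimes c\mapsto h\rightarrow c$ and a left $(H,\alpha)$-Hom-comodule coalgebra with coaction $c\mapsto c_{(-1)}\otimes c_{(0)}$; let $\sigma:H\otimes H\to C$ be a convolution invertible linear map. Let $X=C\otimes H$ with multiplication $(a\otimes h)(b\otimes g)=a[(\alpha^{m}(h_{11})\rightarrow\beta^{-2}(b))\sigma(\alpha^{k+1}(h_{12}),\alpha^{k}(g_{1}))]\otimes\alpha(h_{2}g_{2})$, unit $1_C\otimes1_H$, comultiplication $\Delta(a\otimes h)=a_{1}\otimes\alpha^{m}(a_{2(-1)})\alpha^{-1}(h_{1})\otimes\beta(a_{2(0)})\otimes h_{2}$, counit $\varepsilon(a)\varepsilon(h)$ and structure map $\xi=\beta\otimes\alpha$, and assume $(X,\xi)$ is a monoidal Hom-bialgebra. Define $\varphi^r:X\otimes H\to X$ by $$\varphi^{r}((a\otimes h)\otimes l)=a\,\sigma(\alpha^{k+1}(h_{1}),\alpha^{k+1-m}(l_{1}))\otimes\alpha(h_{2})\alpha^{1-m}(l_{2}),$$ and $\bar\sigma:H\otimes H\to X$ by $\bar\sigma(h\otimes l)=\sigma(\alpha^{k+1-m}(h),\alpha^{k+1-m}(l))\otimes1_H$. Then $(X,\xi,\varphi^r)$ is a right $(H,\alpha,\bar\sigma)$-Hom module, i.e. for all $l,g\in H$ and $x\in X$, $$\varphi^r(\varphi^r(x\otimes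 l)\otimes\alpha(g))=\xi(x)\,\varphi^r(\bar\sigma(l_1,g_1)\otimes l_2g_2)\quad\text{and}\quad\varphi^r(x\otimes1_H)=\xi(x),$$ where juxtaposition is the multiplication of $X$.
   Context: Field $k$; Sweedler notation. Monoidal Hom-algebra $(A,\beta)$: $\beta(a)(bc)=(ab)\beta(c)$, $\beta(ab)=\beta(a)\beta(b)$, $a1=1a=\beta(a)$, $\beta(1)=1$, $\beta$ a linear automorphism. Monoidal Hom-coalgebra $(C,\gamma)$: $\gamma^{-1}(c_1)\otimes\Delta(c_2)=\Delta(c_1)\otimes\gamma^{-1}(c_2)$, $\Delta\gamma=(\gamma\otimes\gamma)\Delta$, $c_1\varepsilon(c_2)=\gamma^{-1}(c)=\varepsilon(c_1)c_2$, $\varepsilon\gamma=\varepsilon$. Monoidal Hom-bialgebra: both with the same structure map and $\Delta,\varepsilon$ multiplicative and unital. Left weak $(H,\alpha)$-Hom-module algebra: $h\rightarrow(ab)=(h_1\rightarrow a)(h_2\rightarrow b)$, $h\rightarrow1=\varepsilon(h)1$. Left $(H,\alpha)$-Hom-comodule $(M,\mu)$: $\Delta_H(x_{(-1)})\otimes\mu^{-1}(x_{(0)})=\alpha^{-1}(x_{(-1)})\otimes x_{(0)(-1)}\otimes x_{(0)(0)}$, $\rho(\mu(x))=\alpha(x_{(-1)})\otimes\mu(x_{(0)})$, $\varepsilon(x_{(-1)})x_{(0)}=\mu^{-1}(x)$; Hom-comodule coalgebra: moreover $b_{(-1)}\otimes b_{(0)1}\otimes b_{(0)2}=b_{1(-1)}b_{2(-1)}\otimes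 b_{1(0)}\otimes b_{2(0)}$, $\varepsilon(b_{(0)})b_{(-1)}=\varepsilon(b)1_H$. $\sigma$ convolution invertible means there is a linear $\sigma^{-1}:H\otimes H\to C$ with $\sigma(h_1,l_1)\sigma^{-1}(h_2,l_2)=\varepsilon(h)\varepsilon(l)1_C=\sigma^{-1}(h_1,l_1)\sigma(h_2,l_2)$. *)

(* Vector spaces over a field K; tensor products are encoded
   as finite sums of pure tensors (seq of tuples) up to tensor equality,
   tested against all multilinear scalar functionals. *)
From HB Require Import structures.
From mathcomp Require Import all_boot all_order all_algebra.
Set Implicit Arguments. Unset Strict Implicit. Unset Printing Implicit Defensive.
Import GRing.Theory.
Local Open Scope ring_scope.

Definition zpow (T : Type) (f finv : T -> T) (m : int) : T -> T :=
  match m with Posz n => iter n f | Negz n => iter n.+1 finv end.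

(* A "space": a carrier with vector-space operations, an equality (equivalence)
   and its space of admissible (linear) scalar functionals. *)
Record space (K : fieldType) := Space {
  scar :> Type;
  szero : scar;
  sadd : scar -> scar -> scar;
  sscale : K -> scar -> scar;
  seqv : scar -> scar -> Prop;
  sdual : (scar -> K) -> Prop }.
Arguments szero {K} s.
Arguments sadd {K s}.
Arguments sscale {K s}.
Arguments seqv {K s}.
Arguments sdual {K} s.

Section Generic.
Variable K : fieldType.

Definition lmodSpace (V : lmodType K) : space K :=
  @Space K V 0 +%R *:%R (@eq V)
    (fun f => forall a x y, f (a *: x + y) = a * f x + f y).

Implicit Types A B D : space K.

Definition ssum A (s : seq A) : A := foldr sadd (szero A) s.

Definition slinear A B (f : A -> B) :=
  [/\ forall x y, seqv (f (sadd x y)) (sadd (f x) (f y)),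
      forall a x, seqv (f (sscale a x)) (sscale a (f x)) &
      forall x y, seqv x y -> seqv (f x) (f y)].

Definition sbilinear A B D (f : A -> B -> D) :=
  (forall b, slinear (f^~ b)) /\ (forall a, slinear (f a)).

Definition ml2 A B (phi : A -> B -> K) :=
  (forall b, sdual A (phi^~ b)) /\ (forall a, sdual B (phi a)).
Definition ml3 A B D (phi : A -> B -> D -> K) :=
  [/\ forall b d, sdual A (fun a => phi a b d),
      forall a d, sdual B (fun b => phi a b d) &
      forall a b, sdual D (fun d => phi a b d)].

Definition teq2 A B (t t' : seq (A * B)) :=
  forall phi, ml2 phi ->
    \sum_(p <- t) phi p.1 p.2 = \sum_(p <- t') phi p.1 p.2.
Definition teq3 A B D (t t' : seq (A * B * D)) :=
  forall phi, ml3 phi ->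
    \sum_(p <- t) phi p.1.1 p.1.2 p.2 = \sum_(p <- t') phi p.1.1 p.1.2 p.2.

Definition tlinear A B D (f : A -> seq (B * D)) :=
  [/\ forall x y, teq2 (f (sadd x y)) (f x ++ f y),
      forall a x, teq2 (f (sscale a x)) [seq (sscale a p.1, p.2) | p <- f x] &
      forall x y, seqv x y -> teq2 (f x) (f y)].

Definition linv A (g ginv : A -> A) :=
  [/\ slinear g, slinear ginv & forall x, seqv (g (ginv x)) x /\ seqv (ginv (g x)) x].

Definition HomAlg A (mul : A -> A -> A) (one : A) (g ginv : A -> A) :=
  [/\ sbilinear mul, linv g ginv,
      forall a b c, seqv (mul (g a) (mul b c)) (mul (mul a b) (g c)),
      forall a b, seqv (g (mul a b)) (mul (g a) (g b)) &
      (forall a, seqv (mul a one) (g a) /\ seqv (mul one a) (g a)) /\ seqv (g one) one].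

Definition HomCoalg A (g ginv : A -> A) (Delta : A -> seq (A * A)) (eps : A -> K) :=
  [/\ linv g ginv, tlinear Delta, sdual A eps,
      forall c, teq3 [seq (ginv p.1, q.1, q.2) | p <- Delta c, q <- Delta p.2]
                     [seq (q.1, q.2, ginv p.2) | p <- Delta c, q <- Delta p.1] &
      [/\ forall c, teq2 (Delta (g c)) [seq (g p.1, g p.2) | p <- Delta c],
          forall c, seqv (ssum [seq sscale (eps p.2) p.1 | p <- Delta c]) (ginv c),
          forall c, seqv (ssum [seq sscale (eps p.1) p.2 | p <- Delta c]) (ginv c) &
          forall c, eps (g c) = eps c]].

Definition HomBialg A (mul : A -> A -> A) (one : A) (g ginv : A -> A)
    (Delta : A -> seq (A * A)) (eps : A -> K) :=
  [/\ HomAlg mul one g ginv, HomCoalg g ginv Delta eps,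
      forall x y, teq2 (Delta (mul x y))
                       [seq (mul p.1 q.1, mul p.2 q.2) | p <- Delta x, q <- Delta y],
      teq2 (Delta one) [:: (one, one)] &
      (forall x y, eps (mul x y) = eps x * eps y) /\ eps one = 1].

Definition WeakHomModAlg (H C : lmodType K) (DeltaH : H -> seq (H * H)) (epsH : H -> K)
    (mulC : C -> C -> C) (oneC : C) (act : H -> C -> C) :=
  [/\ @sbilinear (lmodSpace H) (lmodSpace C) (lmodSpace C) act,
      forall h a b, act h (mulC a b) = \sum_(p <- DeltaH h) mulC (act p.1 a) (act p.2 b) &
      forall h, act h oneC = epsH h *: oneC].

Definition HomComod (H : space K) (M : space K) (alpha alphainv : H -> H)
    (DeltaH : H -> seq (H * H)) (epsH : H -> K) (mu muinv : M -> M)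
    (rho : M -> seq (H * M)) :=
  [/\ tlinear rho,
      forall x, teq3 [seq (q.1, q.2, muinv p.2) | p <- rho x, q <- DeltaH p.1]
                     [seq (alphainv p.1, q.1, q.2) | p <- rho x, q <- rho p.2],
      forall x, teq2 (rho (mu x)) [seq (alpha p.1, mu p.2) | p <- rho x] &
      forall x, seqv (ssum [seq sscale (epsH p.1) p.2 | p <- rho x]) (muinv x)].

Definition HomComodCoalg (H : space K) (C : space K) (alpha alphainv : H -> H)
    (mulH : H -> H -> H) (oneH : H) (DeltaH : H -> seq (H * H)) (epsH : H -> K)
    (beta betainv : C -> C) (DeltaC : C -> seq (C * C)) (epsC : C -> K)
    (rho : C -> seq (H * C)) :=
  [/\ HomComod alpha alphainv DeltaH epsH beta betainv rho,
      forall b, teq3 [seq (p.1, q.1, q.2) | p <- rho b, q <- DeltaC p.2]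
                     (flatten [seq [seq (mulH r.1 s.1, r.2, s.2)
                                   | r <- rho p.1, s <- rho p.2] | p <- DeltaC b]) &
      forall b, seqv (ssum [seq sscale (epsC p.2) p.1 | p <- rho b]) (sscale (epsC b) oneH)].

Definition ConvInv (H C : lmodType K) (DeltaH : H -> seq (H * H)) (epsH : H -> K)
    (mulC : C -> C -> C) (oneC : C) (sigma : H -> H -> C) :=
  @sbilinear (lmodSpace H) (lmodSpace H) (lmodSpace C) sigma /\
  exists sinv : H -> H -> C,
    [/\ @sbilinear (lmodSpace H) (lmodSpace H) (lmodSpace C) sinv,
        forall h l, \sum_(p <- DeltaH h) \sum_(q <- DeltaH l) mulC (sigma p.1 q.1) (sinv p.2 q.2)
                    = (epsH h * epsH l) *: oneC &
        forall h l, \sum_(p <- DeltaH h) \sum_(q <- DeltaH l) mulC (sinv p.1 q.1) (sigma p.2 q.2)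
                    = (epsH h * epsH l) *: oneC].

Definition Xspace (C H : lmodType K) : space K :=
  @Space K (seq (C * H)) [::] cat (fun a x => [seq (a *: p.1, p.2) | p <- x])
    (fun x y => forall phi, @ml2 (lmodSpace C) (lmodSpace H) phi ->
        \sum_(p <- x) phi p.1 p.2 = \sum_(p <- y) phi p.1 p.2)
    (fun f => exists phi, @ml2 (lmodSpace C) (lmodSpace H) phi /\
        forall x, f x = \sum_(p <- x) phi p.1 p.2).

End Generic.

Section Smash.
Variables (K : fieldType) (H C : lmodType K) (m k : int)
  (mulH : H -> H -> H) (oneH : H) (alpha alphainv : H -> H)
  (DeltaH : H -> seq (H * H)) (epsH : H -> K)
  (mulC : C -> C -> C) (oneC : C) (beta betainv : C -> C)
  (DeltaC : C -> seq (C * C)) (epsC : C -> K)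
  (act : H -> C -> C) (rho : C -> seq (H * C)) (sigma : H -> H -> C).

Local Notation al n := (zpow alpha alphainv n).
Local Notation be n := (zpow beta betainv n).
Local Notation X := (seq (C * H)).

Definition mulX_pure (u v : C * H) : X :=
  flatten [seq [seq (mulC u.1 (mulC (act (al m q.1) (be (-2) v.1))
                                     (sigma (al (k + 1) q.2) (al k r.1))),
                     alpha (mulH p.2 r.2))
               | q <- DeltaH p.1, r <- DeltaH v.2] | p <- DeltaH u.2].
Definition mulX (x y : X) : X := flatten [seq mulX_pure u v | u <- x, v <- y].
Definition oneX : X := [:: (oneC, oneH)].
Definition DeltaX_pure (u : C * H) : seq (X * X) :=
  flatten [seq [seq ([:: (p.1, mulH (al m q.1) (alphainv r.1))], [:: (beta q.2, r.2)])
               | q <- rho p.2, r <- DeltaH u.2] | p <- DeltaC u.1].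
Definition DeltaX (x : X) : seq (X * X) := flatten [seq DeltaX_pure u | u <- x].
Definition epsX (x : X) : K := \sum_(p <- x) epsC p.1 * epsH p.2.
Definition xi (x : X) : X := [seq (beta p.1, alpha p.2) | p <- x].
Definition xiinv (x : X) : X := [seq (betainv p.1, alphainv p.2) | p <- x].

Definition phir_pure (u : C * H) (l : H) : X :=
  [seq (mulC u.1 (sigma (al (k + 1) p.1) (al (k + 1 - m) q.1)),
        mulH (alpha p.2) (al (1 - m) q.2)) | p <- DeltaH u.2, q <- DeltaH l].
Definition phir (x : X) (l : H) : X := flatten [seq phir_pure u l | u <- x].
Definition sigmabar (h l : H) : X :=
  [:: (sigma (al (k + 1 - m) h) (al (k + 1 - m) l), oneH)].

End Smash.

From HB Require Import structures.
From mathcomp Require Import all_boot all_order all_algebra.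
From mathcomp Require Import zify.
Set Implicit Arguments. Unset Strict Implicit. Unset Printing Implicit Defensive.
Import GRing.Theory.
Local Open Scope ring_scope.

(* The action is right multiplication in X: φʳ(x ⊗ l) = x (1 ⊗ α⁻ᵐ(l)).  Hence
   φʳ(x ⊗ 1) = x (1 ⊗ 1) = ξ(x), and Hom-associativity of X gives
     φʳ(φʳ(x ⊗ l) ⊗ α(g)) = (x (1 ⊗ α⁻ᵐ(l))) ξ(1 ⊗ α⁻ᵐ(g)) = ξ(x) ((1 ⊗ α⁻ᵐ(l)) (1 ⊗ α⁻ᵐ(g))),
   where (Sweedler sums implicit) the last product is
     β(σ(α^(k+1-m)(l₁), α^(k+1-m)(g₁))) ⊗ α^(1-m)(l₂g₂) = φʳ(σ̄(l₁, g₁) ⊗ l₂g₂).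
   Everything rests on the product formula
     (a ⊗ h)(1 ⊗ g) = a σ(α^(k+1)(h₁), α^(k+1)(g₁)) ⊗ α(h₂g₂),
   which comes from h → 1 = ε(h)1 together with the fact, forced by multiplicativity
   of ξ on X, that β(σ(αᵏ -, αᵏ -)) may be traded for σ(α^(k+1) -, α^(k+1) -). *)

Section Linearity.
Variable K : fieldType.
Implicit Types U V W : lmodType K.

Definition biscalar U V (phi : U -> V -> K) :=
  (forall v, scalar (phi^~ v)) /\ (forall u, scalar (phi u)).

Definition tsum (A B : Type) (phi : A -> B -> K) (t : seq (A * B)) :=
  \sum_(p <- t) phi p.1 p.2.

Lemma tsum_flatten (A B : Type) (phi : A -> B -> K) (s : seq (seq (A * B))) :
  tsum phi (flatten s) = \sum_(t <- s) tsum phi t.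
Proof. exact: big_flatten. Qed.

Lemma slinear_linear V W (f : V -> W) :
  slinear (A := lmodSpace V) (B := lmodSpace W) f -> linear f.
Proof. by case=> fD fZ _ a x y; rewrite /= fD fZ. Qed.

Lemma ssum_lmod V (s : seq V) : ssum (A := lmodSpace V) s = \sum_(x <- s) x.
Proof. by elim: s => [|x s IHs]; rewrite ?big_nil ?big_cons //= -IHs. Qed.

Lemma scalar_sum V (f : V -> K) (I : Type) (s : seq I) (F : I -> V) :
  scalar f -> f (\sum_(i <- s) F i) = \sum_(i <- s) f (F i).
Proof.
move=> fL.
exact: (raddf_sum (HB.pack f (GRing.isLinear.Build K V K *%R f fL) : {scalar V})).
Qed.

Lemma linear_id V : linear (fun x : V => x). Proof. by []. Qed.

Lemma linear_comp U V W (f : V -> W) (g : U -> V) :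
  linear f -> linear g -> linear (fun x => f (g x)).
Proof. by move=> fL gL a x y; rewrite gL fL. Qed.

Lemma scalar_comp U V (f : V -> K) (g : U -> V) :
  scalar f -> linear g -> scalar (fun x => f (g x)).
Proof. by move=> fL gL a x y; rewrite gL fL. Qed.

Lemma scalar_suml V (I : Type) (s : seq I) (F : I -> V -> K) :
  (forall i, scalar (F i)) -> scalar (fun x => \sum_(i <- s) F i x).
Proof.
by move=> FL a x y; rewrite mulr_sumr -big_split; apply: eq_bigr => i _; apply: FL.
Qed.

Lemma scalar_biscalarl U V W (phi : V -> W -> K) w (f : U -> V) :
  biscalar phi -> linear f -> scalar (fun x => phi (f x) w).
Proof. by case=> phiL _; exact: (scalar_comp (phiL w)). Qed.

Lemma scalar_biscalarr U V W (phi : V -> W -> K) v (f : U -> W) :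
  biscalar phi -> linear f -> scalar (fun x => phi v (f x)).
Proof. by case=> _ phiR; exact: (scalar_comp (phiR v)). Qed.

Lemma biscalar_comp U U' V V' (phi : V -> V' -> K) (f : U -> V) (g : U' -> V') :
  biscalar phi -> linear f -> linear g -> biscalar (fun x y => phi (f x) (g y)).
Proof.
by move=> phiL fL gL; split=> z; [apply: scalar_biscalarl | apply: scalar_biscalarr].
Qed.

End Linearity.

Section IntegerPowers.
Variables (T : Type) (f finv : T -> T).
Hypotheses (fK : cancel f finv) (finvK : cancel finv f).
Local Notation fpow := (zpow f finv).

Lemma zpow_addr1 n x : fpow (n + 1) x = f (fpow n x).
Proof.
case: n => [n|[|n]]; first by rewrite -PoszD addn1.
  by rewrite /= finvK.
have -> : Negz n.+1 + 1 = Negz n by rewrite !NegzE; lia.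
by rewrite /= finvK.
Qed.

Lemma zpow_subr1 n x : fpow (n - 1) x = finv (fpow n x).
Proof.
case: n => [[|n]|n] //.
  have -> : n.+1%:Z - 1 = n%:Z by lia.
  by rewrite /= fK.
by have -> : Negz n - 1 = Negz n.+1 by rewrite !NegzE; lia.
Qed.

Lemma zpowD a b x : fpow (a + b) x = fpow a (fpow b x).
Proof.
case: a => n; elim: n => [|n IHn].
- by rewrite add0r.
- have -> : n.+1%:Z + b = n%:Z + b + 1 by lia.
  by rewrite zpow_addr1 IHn.
- have -> : Negz 0 + b = b - 1 by rewrite NegzE; lia.
  by rewrite zpow_subr1.
- have -> : Negz n.+1 + b = Negz n + b - 1 by rewrite !NegzE; lia.
  by rewrite zpow_subr1 IHn.
Qed.

Lemma zpow_ind (P : (T -> T) -> Prop) :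
  P id -> (forall g, P g -> P (fun x => f (g x))) ->
  (forall g, P g -> P (fun x => finv (g x))) -> forall n, P (fpow n).
Proof.
move=> P1 Pf Pfinv [] n; elim: n => [|n IHn] //=.
- exact: (Pf _ IHn).
- exact: (Pfinv _ P1).
- exact: (Pfinv _ IHn).
Qed.

End IntegerPowers.

Section StructureMap.
Variables (K : fieldType) (A : lmodType K) (g ginv : A -> A).
Hypothesis gV : linv (A := lmodSpace A) g ginv.

Lemma structK : cancel g ginv. Proof. by case: gV => _ _ gK x; case: (gK x). Qed.
Lemma structVK : cancel ginv g. Proof. by case: gV => _ _ gK x; case: (gK x). Qed.

Lemma linear_struct : linear g. Proof. by case: gV => /slinear_linear. Qed.
Lemma linear_structV : linear ginv. Proof. by case: gV => _ /slinear_linear. Qed.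

Lemma linear_zpow n : linear (zpow g ginv n).
Proof.
elim/zpow_ind: _ => [|h|h]; first exact: linear_id.
  exact: linear_comp linear_struct.
exact: linear_comp linear_structV.
Qed.

End StructureMap.

Section HomAlgebra.
Variables (K : fieldType) (A : lmodType K) (mul : A -> A -> A) (one : A) (g ginv : A -> A).
Hypothesis algA : HomAlg (A := lmodSpace A) mul one g ginv.

Lemma HomAlg_linv : linv (A := lmodSpace A) g ginv. Proof. by case: algA. Qed.

Lemma linear_mull b : linear (mul^~ b).
Proof. by case: algA => -[mulL _] _ _ _ _; apply/slinear_linear/mulL. Qed.

Lemma linear_mulr a : linear (mul a).
Proof. by case: algA => -[_ mulR] _ _ _ _; apply/slinear_linear/mulR. Qed.

Lemma struct_mul : {morph g : x y / mul x y}.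
Proof. by case: algA. Qed.

Lemma hom_mulr1 x : mul x one = g x.
Proof. by case: algA => _ _ _ _ [/(_ x)[]]. Qed.

Lemma hom_mul1r x : mul one x = g x.
Proof. by case: algA => _ _ _ _ [/(_ x)[]]. Qed.

Lemma struct1 : g one = one.
Proof. by case: algA => _ _ _ _ []. Qed.

Lemma structV1 : ginv one = one.
Proof. by rewrite -{1}struct1 (structK HomAlg_linv). Qed.

Lemma zpow_mul n : {morph zpow g ginv n : x y / mul x y}.
Proof.
have gK := structK HomAlg_linv; have gVK := structVK HomAlg_linv.
elim/zpow_ind: _ => [//|h hM x y|h hM x y]; first by rewrite hM struct_mul.
by rewrite hM -{1}(gVK (h x)) -{1}(gVK (h y)) -struct_mul gK.
Qed.

Lemma zpow1 n : zpow g ginv n one = one.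
Proof. by elim/zpow_ind: _ => [//|h ->|h ->]; rewrite ?struct1 ?structV1. Qed.

End HomAlgebra.

Section HomCoalgebra.
Variables (K : fieldType) (A : lmodType K) (g ginv : A -> A)
  (Delta : A -> seq (A * A)) (eps : A -> K).
Hypothesis coalgA : HomCoalg (A := lmodSpace A) g ginv Delta eps.

Lemma HomCoalg_linv : linv (A := lmodSpace A) g ginv. Proof. by case: coalgA. Qed.

Lemma counit_zpow n c : eps (zpow g ginv n c) = eps c.
Proof.
have epsg : forall c, eps (g c) = eps c by case: coalgA => _ _ _ _ [].
elim/zpow_ind: _ c => [//|h epsh c|h epsh c]; first by rewrite epsg.
by rewrite -(epsh c) -[in RHS](structVK HomCoalg_linv (h c)) epsg.
Qed.

Lemma big_counitl c (F : A -> K) : scalar F ->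
  \sum_(p <- Delta c) eps p.1 * F p.2 = F (ginv c).
Proof.
case: coalgA => _ _ _ _ [_ _ /(_ c) /= <- _] FL.
rewrite ssum_lmod big_map scalar_sum //.
by apply: eq_bigr => p _; rewrite (scalable_linear FL).
Qed.

Lemma big_coproduct_struct c (F : A * A -> K) : biscalar (fun x y => F (x, y)) ->
  \sum_(p <- Delta (g c)) F p = \sum_(p <- Delta c) F (g p.1, g p.2).
Proof.
case: coalgA => _ _ _ _ [DeltaG _ _ _] FL.
transitivity (\sum_(p <- Delta (g c)) F (p.1, p.2)); first by apply: eq_bigr => -[].
by rewrite (DeltaG c _ FL) big_map.
Qed.

Lemma big_coproduct_structV c (F : A * A -> K) : biscalar (fun x y => F (x, y)) ->
  \sum_(p <- Delta (ginv c)) F p = \sum_(p <- Delta c) F (ginv p.1, ginv p.2).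
Proof.
move=> FL; have gVL := linear_structV HomCoalg_linv.
rewrite -{2}[c](structVK HomCoalg_linv) big_coproduct_struct.
  by apply: eq_bigr => -[x y] _; rewrite /= !(structK HomCoalg_linv).
exact: (biscalar_comp FL gVL gVL).
Qed.

Lemma big_coproduct_zpow n c (F : A * A -> K) : biscalar (fun x y => F (x, y)) ->
  \sum_(p <- Delta (zpow g ginv n c)) F p =
  \sum_(p <- Delta c) F (zpow g ginv n p.1, zpow g ginv n p.2).
Proof.
have [gL gVL] := (linear_struct HomCoalg_linv, linear_structV HomCoalg_linv).
elim/zpow_ind: _ c F => [c F _|h IHh c F FL|h IHh c F FL].
- by apply: eq_bigr => -[].
- by rewrite big_coproduct_struct // IHh //; exact: (biscalar_comp FL gL gL).
- by rewrite big_coproduct_structV // IHh //; exact: (biscalar_comp FL gVL gVL).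
Qed.

End HomCoalgebra.

Section HomBialgebra.
Variables (K : fieldType) (A : lmodType K) (mul : A -> A -> A) (one : A) (g ginv : A -> A)
  (Delta : A -> seq (A * A)) (eps : A -> K).
Hypothesis bialgA : HomBialg (A := lmodSpace A) mul one g ginv Delta eps.

Lemma big_coproduct1 (F : A * A -> K) : biscalar (fun x y => F (x, y)) ->
  \sum_(p <- Delta one) F p = F (one, one).
Proof.
case: bialgA => _ _ _ Delta1 _ FL.
transitivity (\sum_(p <- Delta one) F (p.1, p.2)); first by apply: eq_bigr => -[].
by rewrite (Delta1 _ FL) big_seq1.
Qed.

End HomBialgebra.

Section CrossedProductAction.
Variables (K : fieldType) (H C : lmodType K) (m k : int)
  (mulH : H -> H -> H) (oneH : H) (alpha alphainv : H -> H)
  (DeltaH : H -> seq (H * H)) (epsH : H -> K)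
  (mulC : C -> C -> C) (oneC : C) (beta betainv : C -> C)
  (act : H -> C -> C) (sigma : H -> H -> C).

Local Notation al n := (zpow alpha alphainv n).
Local Notation X := (seq (C * H)).
Local Notation mulx := (mulX m k mulH alpha alphainv DeltaH mulC beta betainv act sigma).
Local Notation mulx_pure :=
  (mulX_pure m k mulH alpha alphainv DeltaH mulC beta betainv act sigma).
Local Notation phr := (phir m k mulH alpha alphainv DeltaH mulC sigma).
Local Notation phr_pure := (phir_pure m k mulH alpha alphainv DeltaH mulC sigma).
Local Notation xiX := (xi alpha beta).

Hypothesis bialgH : HomBialg (A := lmodSpace H) mulH oneH alpha alphainv DeltaH epsH.
Hypothesis algC : HomAlg (A := lmodSpace C) mulC oneC beta betainv.
Hypothesis act1 : forall h, act h oneC = epsH h *: oneC.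
Hypothesis linear_sigmal : forall l, linear (sigma^~ l).
Hypothesis linear_sigmar : forall h, linear (sigma h).
Hypothesis algX :
  HomAlg (A := Xspace C H) mulx (oneX oneH oneC) xiX (xiinv alphainv betainv).

Let algH : HomAlg (A := lmodSpace H) mulH oneH alpha alphainv.
Proof. by case: bialgH. Qed.
Let coalgH : HomCoalg (A := lmodSpace H) alpha alphainv DeltaH epsH.
Proof. by case: bialgH. Qed.
Let linvH := HomAlg_linv algH.
Let linvC := HomAlg_linv algC.

Definition eqX (x y : X) := forall phi, biscalar phi -> tsum phi x = tsum phi y.
Local Notation "x =X y" := (eqX x y) (at level 70, no associativity).

Let mulxA x y z : mulx (xiX x) (mulx y z) =X mulx (mulx x y) (xiX z).
Proof. by case: algX => _ _ mulA _ _; apply: mulA. Qed.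

Let xi_mulx x y : xiX (mulx x y) =X mulx (xiX x) (xiX y).
Proof. by case: algX => _ _ _ xiM _; apply: xiM. Qed.

Let mul1x x : mulx (oneX oneH oneC) x =X xiX x.
Proof. by case: algX => _ _ _ _ [/(_ x)[_ mul1] _]. Qed.

Let mulx1 x : mulx x (oneX oneH oneC) =X xiX x.
Proof. by case: algX => _ _ _ _ [/(_ x)[mul1 _] _]. Qed.

Let mulx_eql x y z : x =X y -> mulx x z =X mulx y z.
Proof. by case: algX => -[/(_ z)[_ _ mul_eq] _] _ _ _ _; apply: mul_eq. Qed.

Let mulx_eqr x y z : y =X z -> mulx x y =X mulx x z.
Proof. by case: algX => -[_ /(_ x)[_ _ mul_eq]] _ _ _ _; apply: mul_eq. Qed.

Ltac linearity := repeat first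
  [ assumption | exact: linear_id
  | apply: (linear_comp (linear_zpow linvH _))
  | apply: (linear_comp (linear_struct linvH)) | apply: (linear_comp (linear_structV linvH))
  | apply: (linear_comp (linear_mull algH _)) | apply: (linear_comp (linear_mulr algH _))
  | apply: (linear_comp (linear_struct linvC)) | apply: (linear_comp (linear_structV linvC))
  | apply: (linear_comp (linear_mull algC _)) | apply: (linear_comp (linear_mulr algC _))
  | apply: (linear_comp (linear_sigmal _)) | apply: (linear_comp (linear_sigmar _)) ].

Ltac scalarity := repeat first
  [ apply: scalar_suml => ?
  | apply: scalar_biscalarl; [eassumption | linearity]
  | apply: scalar_biscalarr; [eassumption | linearity] ].

Ltac biscalarity := split=> ? /=; scalarity.

Lemma alD a b x : al (a + b) x = al a (al b x).
Proof. exact: (zpowD (structK linvH) (structVK linvH)). Qed.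

Lemma tsum_mulx (phi : C -> H -> K) x y :
  tsum phi (mulx x y) = \sum_(u <- x) \sum_(v <- y) tsum phi (mulx_pure u v).
Proof. by rewrite tsum_flatten big_allpairs_dep. Qed.

Lemma tsum_phir (phi : C -> H -> K) x l :
  tsum phi (phr x l) = \sum_(u <- x) tsum phi (phr_pure u l).
Proof. by rewrite tsum_flatten big_map. Qed.

Lemma tsum_xi (phi : C -> H -> K) x :
  tsum phi (xiX x) = tsum (fun c h => phi (beta c) (alpha h)) x.
Proof. exact: big_map. Qed.

(* h → 1 = ε(h)1, and the counit then collapses h₁₁ ⊗ h₁₂ to α⁻¹(h₁). *)
Lemma tsum_mul_oneC_beta (phi : C -> H -> K) a h g : biscalar phi ->
  tsum phi (mulx_pure (a, h) (oneC, g)) =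
  \sum_(p <- DeltaH h) \sum_(r <- DeltaH g)
     phi (mulC a (beta (sigma (al k p.1) (al k r.1)))) (alpha (mulH p.2 r.2)).
Proof.
move=> phiL; rewrite tsum_flatten big_map; apply: eq_bigr => p _.
rewrite /tsum big_allpairs_dep /= !(structV1 algC).
under eq_bigr => q _ do under eq_bigr => r _ do
  rewrite act1 (counit_zpow coalgH) (scalable_linear (linear_mull algC _))
          (hom_mul1r algC) (scalable_linear (linear_mulr algC _))
          (scalable_linear (phiL.1 _)).
under eq_bigr => q _ do rewrite -mulr_sumr.
rewrite (big_counitl coalgH _ (F := fun y => \sum_(r <- DeltaH g)
   phi (mulC a (beta (sigma (al (k + 1) y) (al k r.1)))) (alpha (mulH p.2 r.2)))).
  by apply: eq_bigr => r _; rewrite -[alphainv _]/(al (-1) _) -alD addrK.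
scalarity.
Qed.

(* Compare both sides of ξ((a ⊗ h)(1 ⊗ g)) = (β(a) ⊗ α(h))(1 ⊗ α(g)) on the test
   functional ψ(β⁻¹ -, α⁻² -). *)
Lemma beta_sigma_shift (psi : C -> H -> K) a h g : biscalar psi ->
  \sum_(p <- DeltaH h) \sum_(r <- DeltaH g)
     psi (mulC a (beta (sigma (al k p.1) (al k r.1)))) (mulH p.2 r.2) =
  \sum_(p <- DeltaH h) \sum_(r <- DeltaH g)
     psi (mulC a (sigma (al (k + 1) p.1) (al (k + 1) r.1))) (mulH p.2 r.2).
Proof.
move=> psiL; pose phi c l := psi (betainv c) (alphainv (alphainv l)).
have phiL : biscalar phi by rewrite /phi; biscalarity.
transitivity (tsum phi (xiX (mulx [:: (a, h)] [:: (oneC, g)]))).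
  rewrite tsum_xi tsum_mulx !big_seq1 tsum_mul_oneC_beta; last by rewrite /phi; biscalarity.
  apply: eq_bigr => p _; apply: eq_bigr => r _.
  by rewrite /phi /= !(structK linvC, structK linvH).
rewrite (xi_mulx _ _ phiL) tsum_mulx !big_seq1 /= (struct1 algC) tsum_mul_oneC_beta //.
rewrite (big_coproduct_struct coalgH); last by rewrite /phi; biscalarity.
apply: eq_bigr => p _; rewrite (big_coproduct_struct coalgH); last by rewrite /phi; biscalarity.
apply: eq_bigr => r _; rewrite /phi /= -(struct_mul algC) -(struct_mul algH).
rewrite !(structK linvC, structK linvH).
by rewrite -[alpha p.1]/(al 1 p.1) -[alpha r.1]/(al 1 r.1) -!alD.
Qed.

Lemma tsum_mul_oneC (phi : C -> H -> K) a h g : biscalar phi ->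
  tsum phi (mulx_pure (a, h) (oneC, g)) =
  \sum_(p <- DeltaH h) \sum_(r <- DeltaH g)
     phi (mulC a (sigma (al (k + 1) p.1) (al (k + 1) r.1))) (alpha (mulH p.2 r.2)).
Proof.
move=> phiL; rewrite tsum_mul_oneC_beta //.
by apply: (beta_sigma_shift (psi := fun c l => phi c (alpha l))); biscalarity.
Qed.

(* The left unit law (1 ⊗ 1)(1 ⊗ g) = 1 ⊗ α(g), tested on φ(a β⁻¹(-), -). *)
Lemma tsum_mul_oneH_oneC (phi : C -> H -> K) a g : biscalar phi ->
  tsum phi (mulx_pure (a, oneH) (oneC, g)) = phi (beta a) (alpha g).
Proof.
move=> phiL; pose phi' c l := phi (mulC a (betainv c)) l.
have phi'L : biscalar phi' by rewrite /phi'; biscalarity.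
have -> : phi (beta a) (alpha g) = tsum phi' (xiX [:: (oneC, g)]).
  by rewrite /tsum big_seq1 /phi' /= (structK linvC) (hom_mulr1 algC).
rewrite -(mul1x _ phi'L) tsum_mulx !big_seq1 !tsum_mul_oneC //.
rewrite !(big_coproduct1 bialgH); try by rewrite /phi'; biscalarity.
by apply: eq_bigr => r _; rewrite /phi' /= (hom_mul1r algC) (structK linvC).
Qed.

Lemma tsum_phir_pure (phi : C -> H -> K) u l : biscalar phi ->
  tsum phi (phr_pure u l) = tsum phi (mulx_pure u (oneC, al (-m) l)).
Proof.
case: u => a h phiL; rewrite tsum_mul_oneC // /tsum big_allpairs_dep /=.
apply: eq_bigr => p _; rewrite (big_coproduct_zpow coalgH); last by biscalarity.
apply: eq_bigr => q _; rewrite /= (struct_mul algH) -!alD.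
by rewrite -[alpha (al (-m) q.2)]/(al 1 (al (-m) q.2)) -alD.
Qed.

Lemma phirE x l : phr x l =X mulx x [:: (oneC, al (-m) l)].
Proof.
move=> phi phiL; rewrite tsum_phir tsum_mulx.
by apply: eq_bigr => u _; rewrite big_seq1 tsum_phir_pure.
Qed.

Lemma phir_unit x : phr x oneH =X xiX x.
Proof. by move=> phi phiL; rewrite (phirE _ _ phiL) (zpow1 algH) (mulx1 _ phiL). Qed.

Lemma mulx_oneC_oneC l g :
  mulx [:: (oneC, al (-m) l)] [:: (oneC, al (-m) g)] =X
  flatten [seq phr (sigmabar m k oneH alpha alphainv sigma p.1 q.1) (mulH p.2 q.2)
          | p <- DeltaH l, q <- DeltaH g].
Proof.
move=> phi phiL.
rewrite tsum_mulx !big_seq1 tsum_mul_oneC // tsum_flatten big_allpairs_dep.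
rewrite (big_coproduct_zpow coalgH); last by biscalarity.
apply: eq_bigr => p _; rewrite (big_coproduct_zpow coalgH); last by biscalarity.
apply: eq_bigr => q _; rewrite (phirE _ _ phiL) tsum_mulx !big_seq1 tsum_mul_oneH_oneC //.
by rewrite /= (hom_mul1r algC) -(zpow_mul algH) -!alD.
Qed.

Lemma mulx_flatten_r y (s1 s2 : seq (H * H)) (F : H * H -> H * H -> X) :
  flatten [seq mulx y (F p q) | p <- s1, q <- s2] =X
  mulx y (flatten [seq F p q | p <- s1, q <- s2]).
Proof.
move=> phi _; rewrite tsum_flatten big_allpairs_dep tsum_mulx.
under [RHS]eq_bigr => u _ do rewrite big_flatten big_allpairs_dep.
rewrite [RHS]exchange_big; apply: eq_bigr => p _.
by rewrite [RHS]exchange_big; apply: eq_bigr => q _; rewrite tsum_mulx.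
Qed.

Lemma phir_cocycle l g x :
  phr (phr x l) (alpha g) =X
  flatten [seq mulx (xiX x)
                 (phr (sigmabar m k oneH alpha alphainv sigma p.1 q.1) (mulH p.2 q.2))
          | p <- DeltaH l, q <- DeltaH g].
Proof.
move=> phi phiL.
rewrite (mulx_flatten_r _ _ _ _ phiL) (phirE _ _ phiL) (mulx_eql _ (phirE x l) phiL).
have -> : [:: (oneC, al (-m) (alpha g))] = xiX [:: (oneC, al (-m) g)].
  rewrite /= (struct1 algC) -[alpha g]/(al 1 g) -alD.
  by rewrite -[alpha (al _ g)]/(al 1 (al (-m) g)) -alD addrC.
by rewrite -(mulxA x _ _ phiL) (mulx_eqr _ (mulx_oneC_oneC l g) phiL).
Qed.

End CrossedProductAction.

Unset Implicit Arguments.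
Set Strict Implicit.

Theorem lemma4p8 (K : fieldType) (H C : lmodType K) (m k : int)
  (mulH : H -> H -> H) (oneH : H) (alpha alphainv : H -> H)
  (DeltaH : H -> seq (H * H)) (epsH : H -> K)
  (mulC : C -> C -> C) (oneC : C) (beta betainv : C -> C)
  (DeltaC : C -> seq (C * C)) (epsC : C -> K)
  (act : H -> C -> C) (rho : C -> seq (H * C)) (sigma : H -> H -> C) :
  (* (H, alpha) monoidal Hom-bialgebra *)
  @HomBialg K (lmodSpace H) mulH oneH alpha alphainv DeltaH epsH ->
  (* (C, beta) monoidal Hom-algebra *)
  @HomAlg K (lmodSpace C) mulC oneC beta betainv ->
  (* left weak (H, alpha)-Hom-module algebra *)
  WeakHomModAlg DeltaH epsH mulC oneC act ->
  (* (C, beta) Hom-coalgebra and left (H, alpha)-Hom-comodule coalgebra *)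
  @HomCoalg K (lmodSpace C) beta betainv DeltaC epsC ->
  @HomComodCoalg K (lmodSpace H) (lmodSpace C) alpha alphainv mulH oneH DeltaH epsH
     beta betainv DeltaC epsC rho ->
  (* sigma convolution invertible *)
  ConvInv DeltaH epsH mulC oneC sigma ->
  (* (X, xi) = (C (x) H, beta (x) alpha) is a monoidal Hom-bialgebra *)
  @HomBialg K (Xspace C H)
     (mulX m k mulH alpha alphainv DeltaH mulC beta betainv act sigma)
     (oneX oneH oneC) (xi alpha beta) (xiinv alphainv betainv)
     (DeltaX m mulH alpha alphainv DeltaH beta DeltaC rho)
     (epsX epsH epsC) ->
  (forall (l g : H) (x : seq (C * H)),
     @seqv K (Xspace C H)
       (phir m k mulH alpha alphainv DeltaH mulC sigma
          (phir m k mulH alpha alphainv DeltaH mulC sigma x l) (alpha g))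
       (flatten [seq mulX m k mulH alpha alphainv DeltaH mulC beta betainv act sigma
                   (xi alpha beta x)
                   (phir m k mulH alpha alphainv DeltaH mulC sigma
                      (sigmabar m k oneH alpha alphainv sigma p.1 q.1) (mulH p.2 q.2))
                 | p <- DeltaH l, q <- DeltaH g])) /\
  (forall x : seq (C * H),
     @seqv K (Xspace C H)
       (phir m k mulH alpha alphainv DeltaH mulC sigma x oneH) (xi alpha beta x)).
Proof.
move=> bialgH algC [_ _ act1] _ _ [[sigmaL sigmaR] _] [algX _ _ _ _].
have linear_sigmal l : linear (sigma^~ l) := slinear_linear (sigmaL l).
have linear_sigmar h : linear (sigma h) := slinear_linear (sigmaR h).
split=> [l g x | x] phi phiL.
- exact: (phir_cocycle bialgH algC act1 linear_sigmal linear_sigmar algX l g x phiL).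
- exact: (phir_unit bialgH algC act1 linear_sigmal linear_sigmar algX x phiL).
Qed.
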